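(* Fix a level $\ell<K$. Let $\tilde{\boldsymbol\theta}\in\mathbb R^{\mathcal Z^*}$ be such that $\boldsymbol\mu=\tilde{\boldsymbol p}(\tilde{\boldsymbol\theta})$ is coherent among all levels $k>\ell$. Then for every $t\in\mathbb R$ and every node $y\in\mathcal Y^*$ with $\mathrm{level}(y)\le\ell$, the vector $\boldsymbol\mu'=\tilde{\boldsymbol p}(\tilde{\boldsymbol\theta}+t\,\mathbf a_y)$ is also coherent among all levels $k>\ell$, where $\mathbf a_y$ denotes the column of $\mathbf A$ indexed by $y$.
   Context: Fix an integer $K\ge1$. Let $T^*$ be the complete binary tree of depth $K$ whose nodes are intervals: the root (level $0$) has $I_{\mathit{root}}=[0,1)$, and each node $z$ at level $k<K$ with $I_z=[\alpha_z,\beta_z)$ has children $\mathrm{left}(z)$, $\mathrm{right}(z)$ at level $k+1$ with intervals $[\alpha_z,\frac{\alpha_z+\beta_z}2)$ and $[\frac{\alpha_z+\beta_z}2,\beta_z)$. Let $\mathcal Z^*$ be its node set, $\mathcal Z_k$ the nodes at level $k$, $\mathrm{level}(z)$ the level of $z$, and $\mathcal Y^*=\mathcal Z^*\setminus\mathcal Z_K$. Fix liquidity parameters $b_k>0$ ($k=0,\dots,K$) and set $B_\ell=\sum_{k=\ell+1}^K b_k$. For $\tilde{\boldsymbol\theta}\in\mathbb R^{\mathcal Z^*}$, $\tilde p_z(\tilde{\boldsymbol\theta})=e^{\tilde\theta_z/b_k}/\sum_{z'\in\mathcal Z_k}e^{\tilde\theta_{z'}/b_k}$ for $z\in\mathcal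 Z_k$. The constraint matrix $\mathbf A\in\mathbb R^{\mathcal Z^*\times\mathcal Y^*}$ has entries $A_{zy}=B_{\mathrm{level}(z)}$ if $z=y$, $-b_{\mathrm{level}(z)}$ if $I_z\subsetneq I_y$, and $0$ otherwise. A vector $\boldsymbol\mu\in\mathbb R^{\mathcal Z^*}$ is coherent among a set $L$ of levels if for all $k,m\in L$ with $k<m$ and all $z\in\mathcal Z_k$, $\mu_z=\sum_{u\in\mathcal Z_m:\ I_u\subseteq I_z}\mu_u$. *)

From HB Require Import structures.
From mathcomp Require Import all_boot all_order all_algebra.
From mathcomp Require Import boolp reals.
From mathcomp Require Import sequences exp.
Set Implicit Arguments. Unset Strict Implicit. Unset Printing Implicit Defensive.
Import Order.TTheory GRing.Theory Num.Theory.
Local Open Scope ring_scope.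

(* Nodes of the complete binary tree T^* of depth K: a node at level k (0<=k<=K)
   is indexed by j < 2^k. *)
Definition node (K : nat) := {k : 'I_K.+1 & 'I_(2 ^ k)}.

Definition level {K : nat} (z : node K) : nat := val (tag z).
Definition idx {K : nat} (z : node K) : nat := val (tagged z).

Section Tree.
Variables (R : realType) (K : nat).

(* I_z = [alpha_z, beta_z) = [j/2^k, (j+1)/2^k): the closed form of the
   recursive halving construction starting from [0,1). *)
Definition alpha (z : node K) : R := (idx z)%:R / (2 ^ level z)%:R.
Definition beta (z : node K) : R := (idx z).+1%:R / (2 ^ level z)%:R.

Definition inI (z : node K) (x : R) : Prop := alpha z <= x /\ x < beta z.

Definition subI (u z : node K) : Prop := forall x : R, inI u x -> inI z x.
Definition ssubI (u z : node K) : Prop := subI u z /\ ~ subI z u.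

Definition Bsum (b : nat -> R) (l : nat) : R := \sum_(l.+1 <= k < K.+1) (b k).

(* Entry A_{zy} of the constraint matrix (y is meant to range over Y-star). *)
Definition Amat (b : nat -> R) (z y : node K) : R :=
  if z == y then Bsum b (level z)
  else if asbool (ssubI z y) then - b (level z) else 0.

Definition ptilde (b : nat -> R) (theta : node K -> R) (z : node K) : R :=
  expR (theta z / b (level z)) /
  \sum_(z' : node K | level z' == level z) expR (theta z' / b (level z)).

Definition coherent (L : nat -> Prop) (mu : node K -> R) : Prop :=
  forall k m : nat, L k -> L m -> (k < m)%N ->
  forall z : node K, level z = k ->
    mu z = \sum_(u : node K | (level u == m) && asbool (subI u z)) mu u.

End Tree.

From HB Require Import structures.
From mathcomp Require Import all_boot all_order all_algebra.
From mathcomp Require Import boolp reals.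
From mathcomp Require Import sequences exp.
From mathcomp Require Import zify ring lra.
Import Order.TTheory GRing.Theory Num.Theory.
Local Open Scope ring_scope.

(* Fix y with level(y) <= l and put s_w := -t if I_w \subseteq I_y, s_w := 0
   otherwise.  For a node w strictly below level(y) we have w <> y and
   I_w \subsetneq I_y iff I_w \subseteq I_y, so the column a_y gives
   (theta_w + t A_wy) / b_k = theta_w / b_k + s_w.  Hence at every level k > l
   the new prices are the old ones reweighted by c_w = exp(s_w) and
   renormalised level-wise:  mu'_w = mu_w c_w / sum_{level w' = k} mu_w' c_w'.
   Dyadic intervals are nested or disjoint, so the weight c is constant on
   every subtree rooted at a level > l >= level(y).  Reweighting a coherent
   vector by such a weight preserves coherence: the sums inside a subtree are
   scaled by the common factor, and the level-wise normalisers coincide,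
   since summing over level m is summing, over the ancestors at level k, the
   sums inside their subtrees. *)

Section DyadicGrid.
Context {R : numFieldType}.

Lemma pow2_gt0 (n : nat) : (0 : R) < (2 ^ n)%:R.
Proof. by rewrite ltr0n expn_gt0. Qed.

Lemma dyadic_refine (j l n : nat) : (l <= n)%N ->
  j%:R / (2 ^ l)%:R = (j * 2 ^ (n - l))%:R / (2 ^ n)%:R :> R.
Proof.
move=> hln; have -> : (2 ^ n = 2 ^ l * 2 ^ (n - l))%N by rewrite -expnD subnKC.
have h1 := pow2_gt0 l; have h2 := pow2_gt0 (n - l).
rewrite !natrM; field; apply/andP; split; exact: lt0r_neq0.
Qed.

Lemma dyadic_le (i j n : nat) :
  (i%:R / (2 ^ n)%:R <= j%:R / (2 ^ n)%:R :> R) = (i <= j)%N.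
Proof. by rewrite ler_pM2r ?invr_gt0 ?pow2_gt0 // ler_nat. Qed.

Lemma dyadic_lt (i j n : nat) :
  (i%:R / (2 ^ n)%:R < j%:R / (2 ^ n)%:R :> R) = (i < j)%N.
Proof. by rewrite ltr_pM2r ?invr_gt0 ?pow2_gt0 // ltr_nat. Qed.

End DyadicGrid.

Section DyadicIntervals.
Context {R : realType} {K : nat}.

Lemma inI_grid (u : node K) (n i : nat) : (level u <= n)%N ->
  inI u (i%:R / (2 ^ n)%:R : R) <->
  (idx u * 2 ^ (n - level u) <= i < (idx u).+1 * 2 ^ (n - level u))%N.
Proof.
move=> hn; rewrite /inI /alpha /beta (dyadic_refine (idx u) _ _ hn).
rewrite (dyadic_refine (idx u).+1 _ _ hn) dyadic_le dyadic_lt.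
by split => [[-> ->] | /andP[-> ->]].
Qed.

Lemma subI_char (u z : node K) : subI R u z <->
  (level z <= level u)%N /\ (idx u %/ 2 ^ (level u - level z) = idx z)%N.
Proof.
split=> [huz | [hzu hdiv] x [hax hxb]]; last first.
  split.
    apply: le_trans hax; rewrite /alpha (dyadic_refine _ _ _ hzu) dyadic_le -hdiv.
    exact: leq_divM.
  apply: lt_le_trans hxb _; rewrite /beta (dyadic_refine _ _ _ hzu) dyadic_le -hdiv.
  by rewrite -ltn_divLR ?expn_gt0.
have [hzu | huz_lt] := leqP (level z) (level u).
  have /(inI_grid _ _ _ hzu)/andP[h1 h2] :
      inI z ((idx u)%:R / (2 ^ level u)%:R : R).
    by apply: huz; apply/(inI_grid _ _ _ (leqnn _)); rewrite subnn !muln1 leqnn /=.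
  split=> //; apply/eqP; rewrite eqn_leq leq_divRL ?expn_gt0 // h1 andbT.
  by rewrite -ltnS ltn_divLR ?expn_gt0.
(* A deeper z cannot contain u: I_u holds two grid points of level(z),
   whereas I_z holds only one. *)
exfalso; set d := (level z - level u)%N.
have hd : (2 <= 2 ^ d)%N by rewrite -{1}(expn1 2) leq_exp2l // subn_gt0.
have in_z j : (idx u * 2 ^ d <= j < (idx u).+1 * 2 ^ d)%N -> j = idx z.
  move=> hj; have /(inI_grid _ _ _ (leqnn _)) : inI z (j%:R / (2 ^ level z)%:R : R).
    by apply: huz; apply/(inI_grid _ _ _ (ltnW huz_lt)).
  by rewrite subnn !muln1; lia.
have := in_z (idx u * 2 ^ d)%N; have := in_z (idx u * 2 ^ d).+1.
rewrite mulSn; lia.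
Qed.

Lemma ssubI_deeper (w y : node K) : (level y < level w)%N ->
  ssubI R w y <-> subI R w y.
Proof.
move=> hyw; split=> [[] // | hwy]; split=> // /subI_char [hwy_le _].
by rewrite leqNgt hyw in hwy_le.
Qed.

Lemma subI_nested (u z y : node K) : (level y <= level z)%N ->
  subI R u z -> subI R u y -> subI R z y.
Proof.
move=> hyz /subI_char [hzu hz] /subI_char [_ hy]; apply/subI_char; split=> //.
rewrite -hz -hy -divnMA -expnD; congr (_ %/ 2 ^ _)%N; lia.
Qed.

Lemma node_eq (z w : node K) : level z = level w -> idx z = idx w -> z = w.
Proof.
case: z => [kz jz]; case: w => [kw jw]; rewrite /level /idx /= => /val_inj ek.
by subst kw => /val_inj ->.
Qed.

Lemma ancestor_exists (u : node K) (k : nat) : (k <= level u)%N ->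
  exists z : node K, level z = k /\ idx z = (idx u %/ 2 ^ (level u - k))%N.
Proof.
move=> hk.
have hkK : (k < K.+1)%N by apply: (leq_ltn_trans hk (ltn_ord (tag u))).
have hj : (idx u %/ 2 ^ (level u - k) < 2 ^ k)%N.
  by rewrite ltn_divLR ?expn_gt0 // -expnD subnKC //; exact: (ltn_ord (tagged u)).
by exists (existT (fun k0 : 'I_K.+1 => 'I_(2 ^ k0)) (Ordinal hkK) (Ordinal hj)).
Qed.

Lemma sum_by_ancestor (f : node K -> R) (k m : nat) : (k <= m)%N ->
  \sum_(u | level u == m) f u =
  \sum_(z | level z == k) \sum_(u | (level u == m) && asbool (subI R u z)) f u.
Proof.
move=> hkm; rewrite (exchange_big_dep (fun u : node K => level u == m)) /=;
  last by move=> z u _ /andP[].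
apply: eq_bigr => u /eqP hu.
have [z0 [hz0 hidx]] := ancestor_exists u k ltac:(by rewrite hu).
rewrite (big_pred1 z0) // => z /=; rewrite hu eqxx /=.
apply/idP/eqP => [/andP[/eqP hz /asboolP /subI_char [_ hd]] | ->].
  by apply: node_eq; [rewrite hz hz0 | rewrite hidx -hd hz].
rewrite hz0 eqxx /=; apply/asboolP; apply/subI_char.
by rewrite hidx hz0 hu.
Qed.

End DyadicIntervals.

Section Reweighting.
Context {R : realType} {K : nat}.

Definition reweight (mu c : node K -> R) (z : node K) : R :=
  mu z * c z / \sum_(w | level w == level z) mu w * c w.

Lemma coherent_reweight (L : nat -> Prop) (mu c : node K -> R) :
  coherent L mu ->
  (forall (k m : nat) (z u : node K), L k -> L m -> (k < m)%N ->
     level z = k -> level u = m -> subI R u z -> c u = c z) ->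
  coherent L (reweight mu c).
Proof.
move=> hmu hc k m hk hm hkm z hz.
have inside z' : level z' = k ->
    \sum_(u | (level u == m) && asbool (subI R u z')) mu u * c u = mu z' * c z'.
  move=> hz'; rewrite (hmu k m hk hm hkm z' hz') mulr_suml.
  by apply: eq_bigr => u /andP[/eqP hu /asboolP huz]; rewrite (hc k m z' u).
have same_norm : \sum_(w | level w == m) mu w * c w
               = \sum_(w | level w == k) mu w * c w.
  rewrite (sum_by_ancestor _ _ _ (ltnW hkm)).
  by apply: eq_bigr => z' /eqP hz'; rewrite inside.
rewrite /reweight hz -same_norm -inside //.
rewrite [RHS](eq_bigr (fun u => mu u * c u / \sum_(w | level w == m) mu w * c w));
  last by move=> u /andP[/eqP -> _].
by rewrite -mulr_suml.
Qed.

Lemma coherent_ext (L : nat -> Prop) (mu mu' : node K -> R) :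
  coherent L mu -> (forall z : node K, L (level z) -> mu' z = mu z) ->
  coherent L mu'.
Proof.
move=> hmu heq k m hk hm hkm z hz; rewrite heq ?hz // (hmu k m hk hm hkm z hz).
by apply: eq_bigr => u /andP[/eqP hu _]; rewrite heq ?hu.
Qed.

End Reweighting.

Lemma softmax_shift {R : realType} {I : finType} (P : pred I) (a s : I -> R)
    (i : I) : P i ->
  expR (a i + s i) / \sum_(j | P j) expR (a j + s j) =
  expR (a i) / (\sum_(j | P j) expR (a j)) * expR (s i) /
  \sum_(j | P j) expR (a j) / (\sum_(j' | P j') expR (a j')) * expR (s j).
Proof.
move=> hPi; set D := \sum_(j | P j) expR (a j).
have sum_neq0 (f : I -> R) : (forall j, 0 < f j) -> \sum_(j | P j) f j != 0.
  move=> fpos; apply/eqP => /(psumr_eq0P (fun j _ => ltW (fpos j))) /(_ i hPi).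
  by apply/eqP; rewrite gt_eqF.
have hD : D != 0 by apply: sum_neq0 => j; exact: expR_gt0.
have hS : \sum_(j | P j) expR (a j + s j) != 0.
  by apply: sum_neq0 => j; exact: expR_gt0.
have renorm : \sum_(j | P j) expR (a j) / D * expR (s j)
              = (\sum_(j | P j) expR (a j + s j)) / D.
  by rewrite mulr_suml; apply: eq_bigr => j _; rewrite expRD mulrAC.
rewrite renorm expRD.
by field; rewrite hD hS.
Qed.

Lemma ptilde_shift {R : realType} {K : nat} (b : nat -> R)
    (theta theta' s : node K -> R) (k : nat) :
  (forall w : node K, level w = k -> theta' w / b k = theta w / b k + s w) ->
  forall z : node K, level z = k ->
    ptilde b theta' z = reweight (ptilde b theta) (fun w => expR (s w)) z.
Proof.
move=> hshift z hz; rewrite /reweight /ptilde hz.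
rewrite hshift // (eq_bigr (fun w => expR (theta w / b k + s w)));
  last by move=> w /eqP hw; rewrite hshift.
rewrite [X in _ = _ / X](eq_bigr (fun w => expR (theta w / b k) /
    (\sum_(z' | level z' == k) expR (theta z' / b k)) * expR (s w)));
  last by move=> w /eqP ->.
apply: (softmax_shift (fun w : node K => level w == k) (fun w => theta w / b k)).
exact/eqP.
Qed.

Lemma Amat_below {R : realType} {K : nat} (b : nat -> R) (w y : node K) :
  (level y < level w)%N ->
  Amat b w y = if asbool (subI R w y) then - b (level w) else 0.
Proof.
move=> hyw; rewrite /Amat; have -> : (w == y) = false.
  by apply/negbTE/eqP => ewy; rewrite ewy ltnn in hyw.
by rewrite (asbool_equiv_eq (ssubI_deeper w y hyw)).
Qed.

Theorem lemma2 (R : realType) (K : nat) (hK : (1 <= K)%N)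
  (b : nat -> R) (hb : forall k : nat, (k <= K)%N -> 0 < b k)
  (l : nat) (hl : (l < K)%N) (theta : node K -> R) :
  coherent (fun k => (l < k <= K)%N) (ptilde b theta) ->
  forall (t : R) (y : node K), (level y <= l)%N ->
    coherent (fun k => (l < k <= K)%N)
      (ptilde b (fun z => theta z + t * Amat b z y)).
Proof.
move=> hcoh t y hy.
pose s (w : node K) : R := if asbool (subI R w y) then - t else 0.
apply: (coherent_ext _ (reweight (ptilde b theta) (fun w => expR (s w)))).
  apply: coherent_reweight => // k m z u /andP[hlk _] _ _ hz _ huz.
  have hyz : (level y <= level z)%N by rewrite hz ltnW // (leq_ltn_trans hy).
  rewrite /s; congr expR; congr (if _ then _ else _).
  by apply/asboolP/asboolP => [/(subI_nested _ _ _ hyz huz) | hzy x /huz /hzy].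
move=> z /andP[hlz hzK]; apply: (ptilde_shift _ _ _ _ (level z)) => // w hw.
have hbw : b (level z) != 0 by rewrite gt_eqF ?hb.
rewrite Amat_below ?hw ?(leq_ltn_trans hy) // /s.
by case: (asbool _); [field | rewrite mulr0 addr0 addr0].
Qed.
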